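(* Consider a financial exchange in which a central exchange server generates a stream of market data points and sends them over a network to release buffers, each of which delivers the data to one market participant; participants submit trades, which are sent over the network to an ordering buffer that decides the order $O$ in which trades are forwarded to the matching engine. Assume the network has finite but unbounded message latency. If the trigger points of trades are unknown to the system (the order may depend only on delivery times of market data and submission times of trades), then no ordering system can achieve Response Time Fairness.
   Context: For participant $i$ and data point $x$, $D(i,x)$ is the real time $x$ is delivered to participant $i$. For the $a$-th trade $(i,a)$ of participant $i$, $S(i,a)$ is its submission time, $TP(i,a)$ is the market data point (trigger point) in response to which it was generated, and $RT(i,a) = S(i,a) - D(i,TP(i,a))$ is its response time. $O(i,a) < O(j,b)$ means $(i,a)$ is forwarded to the matching engine before $(j,b)$. An ordering system achieves Response Time Fairness if for all trades $(i,a)$, $(j,b)$: whenever $TP(i,a) = TP(j,b)$ and $RT(i,a) < RT(j,b)$, then $O(i,a) < O(j,b)$. ''Finite but unbounded latency'' is the standard asynchronous message-passing model: every message is eventually delivered but there is no a priori bound on its delay. *)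

From Stdlib Require Export Reals.
Open Scope R_scope.

(* Participants are 0..n_part-1, market data points 0..n_data-1 (in order of
   generation), and participant i's trades are (i,0),...,(i, n_trades i - 1)
   in order of submission.  [Obs] is everything the ordering system may
   observe: generation times, delivery times D(i,x), submission times S(i,a).
   Trigger points are NOT part of the observation. *)
Record Obs := mkObs {
  n_part   : nat;
  n_data   : nat;
  gen      : nat -> R;
  deliv    : nat -> nat -> R;
  n_trades : nat -> nat;
  sub      : nat -> nat -> R
}.

Definition Trigger := nat -> nat -> nat.

(* An execution admissible in the asynchronous model with finite but unbounded
   latency: every delivery happens at some finite time no earlier than the
   generation (no a-priori bound on the delay), data points are generated in
   order, each participant's trades are submitted in order, and each trade is
   submitted after the delivery of its trigger point. *)
Definition admissible (o : Obs) (TP : Trigger) : Prop :=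
  (forall x y, (x < y < n_data o)%nat -> gen o x < gen o y) /\
  (forall i x, (i < n_part o)%nat -> (x < n_data o)%nat -> gen o x <= deliv o i x) /\
  (forall i a b, (i < n_part o)%nat -> (a < b < n_trades o i)%nat -> sub o i a < sub o i b) /\
  (forall i a, (i < n_part o)%nat -> (a < n_trades o i)%nat ->
      (TP i a < n_data o)%nat /\ deliv o i (TP i a) < sub o i a).

Definition RT (o : Obs) (TP : Trigger) (i a : nat) : R :=
  sub o i a - deliv o i (TP i a).

(* An ordering is given by forwarding positions: (i,a) is forwarded before
   (j,b) iff pos i a < pos j b.  An ordering system with unknown trigger points
   maps the observation to an ordering. *)
Definition OrderingSystem := Obs -> nat -> nat -> nat.

Definition RTF (o : Obs) (TP : Trigger) (pos : nat -> nat -> nat) : Prop :=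
  forall i a j b,
    (i < n_part o)%nat -> (a < n_trades o i)%nat ->
    (j < n_part o)%nat -> (b < n_trades o j)%nat ->
    TP i a = TP j b -> RT o TP i a < RT o TP j b -> (pos i a < pos j b)%nat.

(** Two participants each submit one trade at the same instant; participant 1
    receives data point 0 before participant 0 but data point 1 after it.  If
    both trades respond to point 0, participant 0 was faster; if both respond to
    point 1, participant 1 was.  The two executions produce the same
    observation, so any ordering system orders the trades wrongly in one. *)

From Stdlib Require Import Lra Lia Arith.

Lemma not_RTF_of_RT_reversal (o : Obs) (pos : nat -> nat -> nat)
    (TP TP' : Trigger) (i a j b : nat) :
  (i < n_part o)%nat -> (a < n_trades o i)%nat ->
  (j < n_part o)%nat -> (b < n_trades o j)%nat ->
  TP i a = TP j b -> RT o TP i a < RT o TP j b ->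
  TP' i a = TP' j b -> RT o TP' j b < RT o TP' i a ->
  ~ RTF o TP pos \/ ~ RTF o TP' pos.
Proof.
  intros Hi Ha Hj Hb HTP HRT HTP' HRT'.
  destruct (lt_dec (pos i a) (pos j b)) as [Hlt | Hge].
  - right; intros Hfair.
    assert (pos j b < pos i a)%nat by (apply Hfair; auto).
    lia.
  - left; intros Hfair.
    apply Hge, Hfair; auto.
Qed.

Definition crossing_obs : Obs :=
  mkObs 2 2 INR
    (fun i x => match i, x with
                | 0%nat, 0%nat => 2 | 0%nat, _ => 3
                | _, 0%nat => 1 | _, _ => 4
                end)
    (fun _ => 1%nat) (fun _ _ => 5).

Definition const_trigger (x : nat) : Trigger := fun _ _ => x.

Lemma crossing_obs_admissible (x : nat) :
  (x < 2)%nat -> admissible crossing_obs (const_trigger x).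
Proof.
  intros Hx; split; [| split; [| split]]; simpl.
  - intros y z Hyz; apply lt_INR; lia.
  - intros [|[|i]] [|[|y]] Hi Hy; simpl; lra || lia.
  - intros i a b _ Hab; lia.
  - intros [|[|i]] a Hi _; (split; [exact Hx |]).
    all: destruct x as [|[|x]]; simpl; lra || lia.
Qed.

Theorem theorem1 :
  forall Osys : OrderingSystem,
    exists (o : Obs) (TP : Trigger), admissible o TP /\ ~ RTF o TP (Osys o).
Proof.
  intros Osys; exists crossing_obs.
  destruct (not_RTF_of_RT_reversal crossing_obs (Osys crossing_obs)
              (const_trigger 0) (const_trigger 1) 0 0 1 0)
    as [Hunfair | Hunfair];
    try (reflexivity || (cbn; lia) || (unfold RT; cbn; lra)).
  - exists (const_trigger 0); split; [apply crossing_obs_admissible; lia | exact Hunfair].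
  - exists (const_trigger 1); split; [apply crossing_obs_admissible; lia | exact Hunfair].
Qed.
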